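(* Let $f$ be a $C^{(3)}$ function on an open interval containing $0$ with $f(0)=f'(0)=0$ and $f''>0$, so that its graph is locally a strictly convex curve $X$ tangent to the $x$-axis at the origin $P=(0,0)$, with curvature $\kappa(P)=f''(0)$ there. For sufficiently small $h>0$ let $s=s(h)<0<t=t(h)$ be the numbers with $f(s)=f(t)=h$, and define $$\alpha_P(h)=\sqrt{h}\,\frac{f'(t)-f'(s)}{-f'(s)f'(t)}.$$ Then $$\lim_{h\to 0^+}\alpha_P(h)=\frac{\sqrt{2}}{\sqrt{\kappa(P)}}.$$ *)

From Stdlib Require Import Reals.
From Coquelicot Require Export Coquelicot.
Open Scope R_scope.

Definition C3_on (f : R -> R) (a b : R) : Prop :=
  forall x, a < x < b ->
    ex_derive_n f 1 x /\ ex_derive_n f 2 x /\ ex_derive_n f 3 x /\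
    continuous (Derive_n f 3) x.

Definition alphaP (f : R -> R) (s t : R) (h : R) : R :=
  sqrt h * (Derive f t - Derive f s) / (- (Derive f s * Derive f t)).

From Stdlib Require Import Reals Lra Psatz.
From Coquelicot Require Import Coquelicot.
Open Scope R_scope.

(* Near 0, both f'(x)/x and f(x)/x^2 are values of f'' at points between 0 and x (mean
   value theorem, resp. Cauchy's mean value theorem), so they tend to k = f''(0) and k/2.
   As f is monotone on each side of 0 and positive off 0, the level points s(h), t(h)
   tend to 0; hence h/t^2 -> k/2 and f'(t)/t -> k, i.e. sqrt h / |f'(t)| -> sqrt(k/2)/k,
   and likewise at s. Since f'(s) < 0 < f'(t), alpha_P(h) is the sum of these two
   quantities, and 2 sqrt(k/2)/k = sqrt 2 / sqrt k. *)

Lemma ball_R (x y : R) (e : R) : ball x e y <-> Rabs (y - x) < e.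
Proof. reflexivity. Qed.

(* For [x <> 0], [0 < c * x < x * x] (resp. [0 <= c * x <= x * x]) says that [c] lies
   strictly (resp. weakly) between [0] and [x]. *)
Lemma between0_interval (a b x c : R) :
  a < 0 < b -> a < x < b -> x <> 0 -> 0 <= c * x <= x * x -> a < c < b.
Proof.
  intros Hab Hx Hx0 [Hc1 Hc2]. destruct (Rle_or_lt x 0) as [Hneg | Hpos].
  - assert (c <= 0) by nra. assert (x <= c) by nra. lra.
  - assert (0 <= c) by nra. assert (c <= x) by nra. lra.
Qed.

Lemma between0_abs (x c : R) : 0 < c * x < x * x -> Rabs c <= Rabs x.
Proof. intros [H1 H2]; unfold Rabs; repeat destruct Rcase_abs; nra. Qed.

Lemma between0_trans (x y z : R) :
  0 < y * x < x * x -> 0 < z * y < y * y -> 0 < z * x < x * x.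
Proof.
  intros [H1 H2] [H3 H4]. destruct (Rle_or_lt 0 x), (Rle_or_lt 0 y); split; nra.
Qed.

Lemma MVT_strict_from_0 (g dg : R -> R) (x : R) :
  x <> 0 ->
  (forall c, 0 <= c * x <= x * x -> is_derive g c (dg c)) ->
  exists c, 0 < c * x < x * x /\ g x - g 0 = dg c * x.
Proof.
  intros Hx Hg.
  destruct (Rlt_or_le 0 x) as [Hpos | Hneg].
  - destruct (MVT_cor2 g dg 0 x Hpos) as [c [E Hc]].
    { intros c Hc. apply is_derive_Reals, Hg. nra. }
    exists c. split; [nra | lra].
  - destruct (MVT_cor2 g dg x 0) as [c [E Hc]]; [lra | |].
    { intros c Hc. apply is_derive_Reals, Hg. nra. }
    exists c. split; [nra | lra].
Qed.

Lemma filterlim_through_intermediate (r g : R -> R) :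
  continuous g 0 ->
  locally' 0 (fun x => exists z, Rabs z <= Rabs x /\ r x = g z) ->
  filterlim r (locally' 0) (locally (g 0)).
Proof.
  intros Hg Hr. apply filterlim_locally. intros eps.
  destruct (proj1 (filterlim_locally _ _) Hg eps) as [d Hd].
  destruct Hr as [d' Hd'].
  exists (mkposreal _ (Rmin_pos _ _ (cond_pos d) (cond_pos d'))). simpl.
  intros x Hx Hx0. rewrite ball_R in Hx.
  destruct (Hd' x) as [z [Hz ->]]; [apply ball_R; pose proof (Rmin_r d d'); lra | exact Hx0 |].
  apply Hd, ball_R. pose proof (Rmin_l d d'). rewrite Rminus_0_r in *. lra.
Qed.

Lemma at_right_0_interval (m : R) : 0 < m -> at_right 0 (fun h => 0 < h < m).
Proof.
  intros Hm. exists (mkposreal m Hm). intros h Hh Hh0.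
  rewrite ball_R, Rminus_0_r, Rabs_pos_eq in Hh by lra. simpl in Hh. lra.
Qed.

Lemma locally'_0_interval (a b : R) : a < 0 < b -> locally' 0 (fun x => a < x < b /\ x <> 0).
Proof.
  intros Hab. unfold locally', within.
  apply (filter_imp (fun x => a < x < b)); [intros x Hx Hx0; auto |].
  apply (locally_interval _ 0 a b); simpl; tauto.
Qed.

Lemma filterlim_sqrt_div {T : Type} (F : (T -> Prop) -> Prop) {FF : Filter F}
    (u v : T -> R) (l m : R) :
  filterlim u F (locally l) -> filterlim v F (locally m) -> m <> 0 ->
  filterlim (fun x => sqrt (u x) / v x) F (locally (sqrt l / m)).
Proof.
  intros Hu Hv Hm.
  apply (filterlim_comp_2 (G := locally (sqrt l)) (H := locally (/ m))
           (fun x => sqrt (u x)) (fun x => / v x) Rmult).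
  - apply filterlim_comp with (1 := Hu). apply continuous_sqrt.
  - apply filterlim_comp with (1 := Hv).
    apply (filterlim_Rbar_inv (Finite m)). intros E. injection E. exact Hm.
  - apply (filterlim_mult (K := R_AbsRing)).
Qed.

Section Convex_germ.

Variables (f : R -> R) (a b : R).
Hypothesis Hab : a < 0 < b.
Hypothesis f_derive : forall x, a < x < b -> is_derive f x (Derive f x).
Hypothesis Df_derive : forall x, a < x < b -> is_derive (Derive f) x (Derive_n f 2 x).
Hypothesis D2f_pos : forall x, a < x < b -> 0 < Derive_n f 2 x.
Hypothesis f0 : f 0 = 0.
Hypothesis Df0 : Derive f 0 = 0.
Hypothesis D2f_cont : continuous (Derive_n f 2) 0.

Lemma Derive_eq_D2_mul (x : R) : a < x < b -> x <> 0 ->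
  exists z, 0 < z * x < x * x /\ Derive f x = Derive_n f 2 z * x.
Proof.
  intros Hx Hx0.
  destruct (MVT_strict_from_0 (Derive f) (Derive_n f 2) x Hx0) as [z [Hz E]].
  - intros c Hc. exact (Df_derive c (between0_interval a b x c Hab Hx Hx0 Hc)).
  - exists z. split; [exact Hz | rewrite Df0 in E; lra].
Qed.

Lemma f_eq_D2_sqr_half (x : R) : a < x < b -> x <> 0 ->
  exists z, 0 < z * x < x * x /\ f x = Derive_n f 2 z * (x * x) / 2.
Proof.
  intros Hx Hx0.
  (* Cauchy's mean value theorem for [f] and [y * y] on the segment from 0 to [x]. *)
  destruct (MVT_strict_from_0 (fun y => f y * (x * x) - f x * (y * y))
              (fun c => Derive f c * (x * x) - f x * (2 * c)) x Hx0) as [c [Hc E]].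
  - intros c Hc.
    pose proof (f_derive c (between0_interval a b x c Hab Hx Hx0 Hc)) as Hfc.
    auto_derive; [exists (Derive f c); exact Hfc |].
    change (Derive (fun y => f y) c) with (Derive f c). ring.
  - rewrite f0 in E.
    assert (Hc0 : c <> 0) by nra.
    assert (Hcx : a < c < b) by (apply (between0_interval a b x c); auto; lra).
    destruct (Derive_eq_D2_mul c Hcx Hc0) as [z [Hz Ez]].
    exists z. split; [exact (between0_trans x c z Hc Hz) |].
    rewrite Ez in E. apply (Rmult_eq_reg_l (c * x)); [nra | nra].
Qed.

Lemma Derive_mul_pos (x : R) : a < x < b -> x <> 0 -> 0 < x * Derive f x.
Proof.
  intros Hx Hx0. destruct (Derive_eq_D2_mul x Hx Hx0) as [z [Hz ->]].
  assert (0 < Derive_n f 2 z) by (apply D2f_pos, (between0_interval a b x z); auto; lra).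
  destruct Hz. nra.
Qed.

Lemma f_pos (x : R) : a < x < b -> x <> 0 -> 0 < f x.
Proof.
  intros Hx Hx0. destruct (f_eq_D2_sqr_half x Hx Hx0) as [z [Hz ->]].
  assert (0 < Derive_n f 2 z) by (apply D2f_pos, (between0_interval a b x z); auto; lra).
  destruct Hz. nra.
Qed.

Lemma f_le_scale (y l : R) : a < y < b -> 0 <= l <= 1 -> f (l * y) <= f y.
Proof.
  intros Hy Hl.
  assert (Hseg : forall c, Rmin (l * y) y <= c <= Rmax (l * y) y -> a < c < b).
  { assert (a < l * y < b) by (destruct Hy, Hl, (Rle_or_lt 0 y); split; nra).
    intros c; unfold Rmin, Rmax; destruct Rle_dec; lra. }
  destruct (MVT_gen f (l * y) y (Derive f)) as [c [Hc E]].
  - intros c Hc. apply f_derive, Hseg. lra.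
  - intros c Hc. apply continuity_pt_filterlim, (ex_derive_continuous f).
    exists (Derive f c). apply f_derive, Hseg, Hc.
  - assert (Hcy : 0 <= y * Derive f c).
    { destruct (Req_dec c 0) as [-> | Hc0]; [rewrite Df0; lra |].
      pose proof (Derive_mul_pos c (Hseg c Hc) Hc0).
      assert (0 <= c * y)
        by (destruct Hl; revert Hc; unfold Rmin, Rmax; destruct Rle_dec; intros [Hc1 Hc2]; nra).
      nra. }
    destruct Hl. nra.
Qed.

Lemma Rmin_f_pm_le (y r : R) : a < y < b -> 0 < r <= Rabs y ->
  Rmin (f r) (f (- r)) <= f y.
Proof.
  intros Hy [Hr Hry].
  assert (Hscale : forall z, 0 < z * y <= y * y -> f z <= f y).
  { intros z [Hzy1 Hzy2].
    assert (Hy0 : y <> 0) by (intros ->; lra).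
    assert (Hl : z / y * y = z) by (field; exact Hy0).
    set (l := z / y) in Hl. rewrite <- Hl in *. apply f_le_scale; [exact Hy |].
    split; nra. }
  destruct (Rle_or_lt 0 y).
  - rewrite Rabs_pos_eq in Hry by lra.
    apply Rle_trans with (f r); [apply Rmin_l |]. apply Hscale. split; nra.
  - rewrite Rabs_left in Hry by lra.
    apply Rle_trans with (f (- r)); [apply Rmin_r |]. apply Hscale. split; nra.
Qed.

Lemma level_point_limit (X : R -> R) :
  at_right 0 (fun h => a < X h < b /\ X h <> 0 /\ f (X h) = h) ->
  filterlim X (at_right 0) (locally' 0).
Proof.
  intros HX P [eps HP]. unfold filtermap.
  set (r := Rmin eps (Rmin b (- a)) / 2).
  assert (Hr : 0 < r < eps /\ a < - r /\ r < b).
  { pose proof (Rmin_l eps (Rmin b (- a))). pose proof (Rmin_r eps (Rmin b (- a))).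
    pose proof (Rmin_l b (- a)). pose proof (Rmin_r b (- a)).
    assert (0 < Rmin eps (Rmin b (- a)))
      by (apply Rmin_pos; [apply cond_pos | apply Rmin_pos; lra]).
    unfold r. lra. }
  set (m := Rmin (f r) (f (- r))).
  assert (Hm : 0 < m) by (apply Rmin_pos; apply f_pos; lra).
  apply (filter_imp (fun h => (a < X h < b /\ X h <> 0 /\ f (X h) = h) /\ 0 < h < m));
    [| exact (filter_and _ _ HX (at_right_0_interval m Hm))].
  intros h [[HXab [HX0 HfX]] Hh].
  apply HP; [| exact HX0]. apply ball_R. rewrite Rminus_0_r.
  destruct (Rlt_or_le (Rabs (X h)) r) as [Hlt | Hge]; [lra |].
  pose proof (Rmin_f_pm_le (X h) r HXab ltac:(lra)) as Hfr. fold m in Hfr. lra.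
Qed.

Lemma Derive_div_id_limit :
  filterlim (fun x => Derive f x / x) (locally' 0) (locally (Derive_n f 2 0)).
Proof.
  apply filterlim_through_intermediate; [exact D2f_cont |].
  eapply filter_imp; [| exact (locally'_0_interval a b Hab)].
  intros x [Hx Hx0].
  destruct (Derive_eq_D2_mul x Hx Hx0) as [z [Hz ->]].
  exists z. split; [exact (between0_abs x z Hz) | field; exact Hx0].
Qed.

Lemma f_div_sqr_limit :
  filterlim (fun x => f x / (x * x)) (locally' 0) (locally (Derive_n f 2 0 / 2)).
Proof.
  apply (filterlim_through_intermediate _ (fun z => Derive_n f 2 z / 2)).
  - apply (continuous_mult (K := R_AbsRing) _ (fun _ => / 2)); [exact D2f_cont |].
    apply continuous_const.
  - eapply filter_imp; [| exact (locally'_0_interval a b Hab)].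
    intros x [Hx Hx0].
    destruct (f_eq_D2_sqr_half x Hx Hx0) as [z [Hz ->]].
    exists z. split; [exact (between0_abs x z Hz) | field; exact Hx0].
Qed.

Lemma level_sqrt_div_Derive_limit (X : R -> R) :
  at_right 0 (fun h => a < X h < b /\ X h <> 0 /\ f (X h) = h) ->
  filterlim (fun h => sqrt h / Rabs (Derive f (X h))) (at_right 0)
    (locally (sqrt (Derive_n f 2 0 / 2) / Derive_n f 2 0)).
Proof.
  intros HX.
  pose proof (level_point_limit X HX) as HX0.
  assert (Hu : filterlim (fun h => h / (X h * X h)) (at_right 0)
                 (locally (Derive_n f 2 0 / 2))).
  { apply (filterlim_ext_loc (fun h => f (X h) / (X h * X h))).
    - refine (filter_imp _ _ _ HX). intros h (_ & _ & ->). reflexivity.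
    - exact (filterlim_comp _ _ _ X (fun x => f x / (x * x)) _ _ _ HX0 f_div_sqr_limit). }
  assert (Hv : filterlim (fun h => Derive f (X h) / X h) (at_right 0)
                 (locally (Derive_n f 2 0))).
  { exact (filterlim_comp _ _ _ X (fun x => Derive f x / x) _ _ _ HX0 Derive_div_id_limit). }
  assert (Hk : Derive_n f 2 0 <> 0) by (apply Rgt_not_eq, D2f_pos; lra).
  refine (filterlim_ext_loc _ _ _ (filterlim_sqrt_div _ _ _ _ _ Hu Hv Hk)).
  apply (filter_imp (fun h => (a < X h < b /\ X h <> 0 /\ f (X h) = h) /\ 0 < h < 1));
    [| exact (filter_and _ _ HX (at_right_0_interval 1 Rlt_0_1))].
  intros h [[HXab [HX0' _]] Hh].
  pose proof (Derive_mul_pos (X h) HXab HX0') as Hsign.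
  rewrite sqrt_div by (lra || (apply Rsqr_pos_lt; exact HX0')).
  change (X h * X h) with (Rsqr (X h)). rewrite sqrt_Rsqr_abs.
  destruct (Rle_or_lt 0 (X h)).
  - rewrite !Rabs_pos_eq by nra. field. nra.
  - rewrite !Rabs_left by nra. field. nra.
Qed.

End Convex_germ.

Lemma twice_sqrt_half_div (k : R) : 0 < k -> 2 * (sqrt (k / 2) / k) = sqrt 2 / sqrt k.
Proof.
  intros Hk.
  assert (Hsk : 0 < sqrt k) by (apply sqrt_lt_R0; exact Hk).
  assert (Hs2 : 0 < sqrt 2) by (apply sqrt_lt_R0; lra).
  rewrite sqrt_div by lra.
  rewrite <- (sqrt_sqrt k) at 2 by lra. rewrite <- (sqrt_sqrt 2) at 1 by lra.
  field. lra.
Qed.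

Theorem lemma5 (f : R -> R) (a b : R) (s t : R -> R) :
  a < 0 < b ->
  C3_on f a b ->
  f 0 = 0 ->
  Derive f 0 = 0 ->
  (forall x, a < x < b -> 0 < Derive_n f 2 x) ->
  (exists delta, 0 < delta /\
     forall h, 0 < h < delta ->
       a < s h < 0 /\ 0 < t h < b /\ f (s h) = h /\ f (t h) = h) ->
  filterlim (fun h => alphaP f (s h) (t h) h) (at_right 0)
            (locally (sqrt 2 / sqrt (Derive_n f 2 0))).
Proof.
  intros Hab HC f0 Df0 D2f_pos [delta [Hdelta Hst]].
  assert (f_derive : forall x, a < x < b -> is_derive f x (Derive f x))
    by (intros x Hx; apply Derive_correct, (HC x Hx)).
  assert (Df_derive : forall x, a < x < b -> is_derive (Derive f) x (Derive_n f 2 x))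
    by (intros x Hx; apply (Derive_correct (Derive_n f 1)), (HC x Hx)).
  assert (D2f_cont : continuous (Derive_n f 2) 0)
    by (apply (ex_derive_continuous (Derive_n f 2)), (HC 0 Hab)).
  assert (Hnear := at_right_0_interval delta Hdelta).
  assert (Hlevel : forall X : R -> R,
             (forall h, 0 < h < delta -> a < X h < b /\ X h <> 0 /\ f (X h) = h) ->
             filterlim (fun h => sqrt h / Rabs (Derive f (X h))) (at_right 0)
               (locally (sqrt (Derive_n f 2 0 / 2) / Derive_n f 2 0))).
  { intros X HX. apply (level_sqrt_div_Derive_limit f a b); auto.
    exact (filter_imp _ _ HX Hnear). }
  assert (Lt := Hlevel t ltac:(intros h Hh; destruct (Hst h Hh) as (_ & ? & _ & ?);
                               repeat split; lra)).
  assert (Ls := Hlevel s ltac:(intros h Hh; destruct (Hst h Hh) as (? & _ & ? & _);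
                               repeat split; lra)).
  rewrite <- (twice_sqrt_half_div _ (D2f_pos 0 Hab)), <- Rplus_diag.
  apply (filterlim_ext_loc
           (fun h => sqrt h / Rabs (Derive f (t h)) + sqrt h / Rabs (Derive f (s h)))).
  - refine (filter_imp _ _ _ Hnear). intros h Hh.
    destruct (Hst h Hh) as (Hs & Ht & _).
    pose proof (Derive_mul_pos f a b Hab Df_derive D2f_pos Df0 (t h) ltac:(lra) ltac:(lra)).
    pose proof (Derive_mul_pos f a b Hab Df_derive D2f_pos Df0 (s h) ltac:(lra) ltac:(lra)).
    unfold alphaP. rewrite Rabs_pos_eq, (Rabs_left (Derive f (s h))) by nra.
    field. split; nra.
  - apply (filterlim_comp_2 _ _ Rplus Lt Ls), (filterlim_plus (V := R_NormedModule)).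
Qed.
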